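(* There exist $\alpha>0$, $\gamma\in(0,1]$, integers $m\ge1$, $k\ge2$, a set $\mathcal{X}$, a class $\mathcal{H}$ of functions $\mathcal{X}\to\{0,1\}$, $\bar{x}\in\mathcal{X}^k$, a panel $\bar{j}=\bar{j}^{\alpha,\gamma}_{j^1,\dots,j^m}$ and $\pi\in\Delta\mathcal{H}$ such that simultaneously (1) $\mathbb{E}_{h\sim\pi}[Unfair^{\alpha,\gamma}(h,\bar{x},\bar{j})]=1$, and (2) $Unfair^{\alpha,\gamma}(\pi,\bar{x},\bar{j})=0$.
   Context: $\Delta\mathcal{H}$ is the set of distributions over $\mathcal{H}$, $\pi(x):=\Pr_{h\sim\pi}[h(x)=1]$, and a hypothesis $h$ is identified with the point mass on $h$. An auditor $j$ has $d^j:\mathcal{X}^2\to[0,1]$ (nonnegative, symmetric); $\pi$ has an $\alpha$-violation on $(x,x')$ w.r.t. $j$ if $\pi(x)-\pi(x')>d^j(x,x')+\alpha$. The panel $\bar{j}^{\alpha,\gamma}_{j^1,\dots,j^m}$ maps $(\pi,\bar{x})$, $\bar{x}\in\mathcal{X}^k$, to some pair $(\bar{x}^s,\bar{x}^l)$ with $s\ne l$ on which at least $\lceil\gamma m\rceil$ of the auditors detect an $\alpha$-violation of $\pi$, if such a pair exists, and to $(v,v)$ for a fixed default $v\in\mathcal{X}$ otherwise. $Unfair^{\alpha,\gamma}(\pi,\bar{x},\bar{j})=1$ if the panel outputs a pair with $s\ne l$, and $0$ otherwise. *)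

From mathcomp Require Import all_boot all_order all_algebra.
From mathcomp Require Import reals.
Set Implicit Arguments. Unset Strict Implicit. Unset Printing Implicit Defensive.
Import Order.TTheory GRing.Theory Num.Theory.
Local Open Scope ring_scope.

Section Fairness.
Variables (R : realType) (X : finType).

Definition hyp := {ffun X -> bool}.

Definition is_dist (H : {set hyp}) (pi : {ffun hyp -> R}) : Prop :=
  (forall h, 0 <= pi h) /\ (forall h, h \notin H -> pi h = 0) /\
  \sum_(h in H) pi h = 1.

(* pi(x) := Pr_{h ~ pi}[h(x) = 1] *)
Definition prob1 (H : {set hyp}) (pi : {ffun hyp -> R}) (x : X) : R :=
  \sum_(h in H) pi h * (h x)%:R.

(* h identified with the point mass on h *)
Definition point_prob (h : hyp) (x : X) : R := (h x)%:R.

Definition auditors (m : nat) (d : 'I_m -> X -> X -> R) : Prop :=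
  forall j x x', 0 <= d j x x' <= 1 /\ d j x x' = d j x' x.

Definition violation (alpha : R) (m : nat) (d : 'I_m -> X -> X -> R)
  (p : X -> R) (j : 'I_m) (x x' : X) : bool :=
  p x - p x' > d j x x' + alpha.

Definition panel_ok (alpha gamma : R) (m : nat) (d : 'I_m -> X -> X -> R)
  (p : X -> R) (k : nat) (xbar : 'I_k -> X) (sl : 'I_k * 'I_k) : bool :=
  (sl.1 != sl.2) &&
  (Num.ceil (gamma * m%:R) <=
     (#|[set j : 'I_m | violation alpha d p j (xbar sl.1) (xbar sl.2)]|)%:Z).

Definition panel_pick (alpha gamma : R) (m : nat) (d : 'I_m -> X -> X -> R)
  (p : X -> R) (k : nat) (xbar : 'I_k -> X) : option ('I_k * 'I_k) :=
  [pick sl | panel_ok alpha gamma d p xbar sl].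

Definition panel (v : X) (alpha gamma : R) (m : nat) (d : 'I_m -> X -> X -> R)
  (p : X -> R) (k : nat) (xbar : 'I_k -> X) : X * X :=
  match panel_pick alpha gamma d p xbar with
  | Some sl => (xbar sl.1, xbar sl.2)
  | None => (v, v)
  end.

Definition Unfair (alpha gamma : R) (m : nat) (d : 'I_m -> X -> X -> R)
  (p : X -> R) (k : nat) (xbar : 'I_k -> X) : nat :=
  if panel_pick alpha gamma d p xbar is Some _ then 1%N else 0%N.

End Fairness.

(* Take X = bool, the hypothesis h = id and its complement ~h, and a single
   auditor with the zero metric. Each of h and ~h separates false and true by
   1, a violation for any alpha < 1, so both are judged unfair and so is
   their uniform mixture in expectation. The mixture itself, however,
   predicts 1/2 everywhere, and a constant predictor violates nothing. *)
From mathcomp Require Import all_boot all_order all_algebra.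
From mathcomp Require Import reals.
Set Implicit Arguments. Unset Strict Implicit. Unset Printing Implicit Defensive.
Import Order.TTheory GRing.Theory Num.Theory.
Local Open Scope ring_scope.

Section Panel.
Variables (R : realType) (X : finType) (alpha gamma : R) (m k : nat).
Variables (d : 'I_m -> X -> X -> R) (xbar : 'I_k -> X).

Lemma Unfair_unanimous (p : X -> R) (s l : 'I_k) :
  gamma <= 1 -> s != l -> (forall j, violation alpha d p j (xbar s) (xbar l)) ->
  Unfair alpha gamma d p xbar = 1%N.
Proof.
move=> gamma_le1 neq_sl all_viol; rewrite /Unfair /panel_pick.
case: pickP => // /(_ (s, l)); rewrite /panel_ok /= neq_sl /=.
have -> : [set j | violation alpha d p j (xbar s) (xbar l)] = setT.
  by apply/setP => j; rewrite !inE all_viol.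
by rewrite cardsT card_ord ceil_le_int pmulrn ler_piMl // ler0n.
Qed.

Lemma Unfair_const (p : X -> R) (c : R) :
  0 <= alpha -> 0 < gamma -> (0 < m)%N -> (forall j x x', 0 <= d j x x') ->
  (forall x, p x = c) -> Unfair alpha gamma d p xbar = 0%N.
Proof.
move=> alpha_ge0 gamma_gt0 m_gt0 d_ge0 p_const; rewrite /Unfair /panel_pick.
case: pickP => // sl; rewrite /panel_ok.
have -> : [set j | violation alpha d p j (xbar sl.1) (xbar sl.2)] = set0.
  apply/setP => j; rewrite !inE /violation !p_const subrr.
  by rewrite ltNge addr_ge0.
by rewrite cards0 ceil_le0 leNgt mulr_gt0 ?ltr0n // andbF.
Qed.

End Panel.

Section Mixture.
Variables (R : realType) (X : finType).

Lemma expectation_const (H : {set hyp X}) (pi : {ffun hyp X -> R}) (f : hyp X -> R) (c : R) :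
  is_dist H pi -> {in H, forall h, f h = c} -> \sum_(h in H) pi h * f h = c.
Proof.
move=> [_ [_ pi_sum1]] f_const.
rewrite (eq_bigr (fun h => pi h * c)) => [|h /f_const -> //].
by rewrite -big_distrl /= pi_sum1 mul1r.
Qed.

Definition uniform2 (h h' : hyp X) : {ffun hyp X -> R} :=
  [ffun g => if g \in [set h; h'] then 2^-1 else 0].

Lemma sum_set2 (h h' : hyp X) (F : hyp X -> R) :
  h != h' -> \sum_(g in [set h; h']) F g = F h + F h'.
Proof. by move=> neq_hh'; rewrite big_setU1 ?inE //= big_set1. Qed.

Lemma is_dist_uniform2 (h h' : hyp X) :
  h != h' -> is_dist [set h; h'] (uniform2 h h').
Proof.
move=> neq_hh'; split; last split.
- by move=> g; rewrite ffunE; case: ifP; rewrite ?invr_ge0 ?ler0n.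
- by move=> g /negbTE g_notin; rewrite ffunE g_notin.
- by rewrite sum_set2 // !ffunE !inE !eqxx orbT [RHS](splitr 1) mul1r.
Qed.

Definition hypC (h : hyp X) : hyp X := [ffun x => ~~ h x].

Lemma hypC_neq (h : hyp X) (x : X) : h != hypC h.
Proof. by apply/eqP => /ffunP /(_ x); rewrite ffunE; case: (h x). Qed.

Lemma prob1_uniform2_hypC (h : hyp X) (x : X) :
  prob1 [set h; hypC h] (uniform2 h (hypC h)) x = 2^-1.
Proof.
rewrite /prob1 sum_set2 ?(hypC_neq h x) // !ffunE !inE !eqxx orbT -mulrDr.
by case: (h x); rewrite ?addr0 ?add0r mulr1.
Qed.

Lemma violation_point (m : nat) (alpha : R) (d : 'I_m -> X -> X -> R)
    (h : hyp X) (j : 'I_m) (x x' : X) :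
  h x -> ~~ h x' -> d j x x' + alpha < 1 ->
  violation alpha d (point_prob R h) j x x'.
Proof.
by move=> hx hx'; rewrite /violation /point_prob hx (negbTE hx') subr0.
Qed.

End Mixture.

Theorem lemma5 (R : realType) :
  exists (alpha gamma : R) (m k : nat) (X : finType) (H : {set hyp X})
         (xbar : 'I_k -> X) (d : 'I_m -> X -> X -> R) (pi : {ffun hyp X -> R}),
    0 < alpha /\ 0 < gamma <= 1 /\ (1 <= m)%N /\ (2 <= k)%N /\
    auditors d /\ is_dist H pi /\
    \sum_(h in H) pi h * (Unfair alpha gamma d (point_prob R h) xbar)%:R = 1 /\
    Unfair alpha gamma d (prob1 H pi) xbar = 0%N.
Proof.
pose h : hyp bool := [ffun x => x].
pose H := [set h; hypC h].
pose xbar : 'I_2 -> bool := fun i => i == ord_max.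
pose d : 'I_1 -> bool -> bool -> R := fun _ _ _ => 0.
have half_lt1 : 0 + 2^-1 < 1 :> R by rewrite add0r invf_lt1 ?ltr1n.
have pi_dist : is_dist H (uniform2 R h (hypC h)).
  exact/is_dist_uniform2/(hypC_neq h true).
exists 2^-1, 1, 1%N, 2%N, bool, H, xbar, d, (uniform2 R h (hypC h)).
split; first by rewrite invr_gt0 ltr0n.
split; first by rewrite ltr01 lexx.
do 2 split => //.
split; first by move=> j x x'; rewrite /d lexx ler01.
split; first exact: pi_dist.
split.
  apply: expectation_const => // g; rewrite !inE => /orP[] /eqP ->.
  - by rewrite (Unfair_unanimous (s := ord_max) (l := ord0)) //
      => j; apply: violation_point; rewrite /xbar ?ffunE.
  - by rewrite (Unfair_unanimous (s := ord0) (l := ord_max)) //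
      => j; apply: violation_point; rewrite /xbar ?ffunE.
apply: Unfair_const (prob1_uniform2_hypC R h) => //.
by rewrite invr_ge0 ler0n.
Qed.
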